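(* Let $l$ be a linear form in the variables $Y\cup Z$ over a field $\mathbb{F}$ and $t$ a positive integer. Then $\mathrm{maxrank}(M_{l^t})\le t+1$.
   Context: $Y$ and $Z$ are disjoint finite sets of variables (arising from an arbitrary partition of a variable set into $Y$ and $Z$). For $g\in\mathbb{F}[Y,Z]$, the polynomial coefficient matrix $M_g$ has rows indexed by monic multilinear monomials $p$ in $Y$ and columns by monic multilinear monomials $q$ in $Z$, with $M_g(p,q)=G$ iff $g=pq\,G+Q$ uniquely with $G$ containing only variables present in $p,q$ and $Q$ having no monomial divisible by $pq$ that contains only variables present in $p,q$. $\mathrm{maxrank}(M_g)=\max_{S:Y\cup Z\to\mathbb{F}}\mathrm{rank}(M_g|_S)$, where $M_g|_S$ evaluates entries at $S$. *)

From HB Require Import structures.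
From mathcomp Require Import all_boot all_order all_algebra.
From mathcomp Require Import mpoly.
Set Implicit Arguments. Unset Strict Implicit. Unset Printing Implicit Defensive.
Import GRing.Theory.
Local Open Scope ring_scope.

(* Variables are 'I_n; the partition is Y and Z := ~: Y.
   A monic multilinear monomial in Y (resp. Z) is identified with its set of
   variables A \subset Y (resp. B \subset ~: Y), i.e. an element of powerset Y. *)

(* The entry M_g(p,q), for p = prod_{i in A} x_i, q = prod_{j in B} x_j:
   the unique G with only variables in A :|: B such that g = p q G + Q and no
   monomial of Q is divisible by pq while using only variables of A :|: B. *)
Definition coef_entry (F : fieldType) (n : nat) (g : {mpoly F[n]})
    (A B : {set 'I_n}) : {mpoly F[n]} :=
  \sum_(m <- msupp g | [set i | (m i != 0)%N] == A :|: B)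
     g@_m *: \prod_(i < n) 'X_i ^+ (m i).-1.

Definition coef_matrix (F : fieldType) (n : nat) (Y : {set 'I_n})
    (g : {mpoly F[n]}) :
    'M[{mpoly F[n]}]_(#|powerset Y|, #|powerset (~: Y)|) :=
  \matrix_(i, j) coef_entry g (enum_val i) (enum_val j).

Definition coef_matrix_eval (F : fieldType) (n : nat) (Y : {set 'I_n})
    (g : {mpoly F[n]}) (S : 'I_n -> F) :
    'M[F]_(#|powerset Y|, #|powerset (~: Y)|) :=
  map_mx (fun G : {mpoly F[n]} => G.@[S]) (coef_matrix Y g).

Definition linear_form (F : fieldType) (n : nat) (c : 'I_n -> F) : {mpoly F[n]} :=
  \sum_(i < n) c i *: 'X_i.

(* The entry of M_g at (A, B) is obtained from g by a linear map [supp_quo]: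
   keep the monomials with support exactly A :|: B and divide them by the
   product of those variables.  Split l = l_Y + l_Z into its Y- and Z-parts.
   For p in the Y-variables and q in the Z-variables the support of a product
   monomial splits along the partition, so supp_quo (A :|: B) (p q) =
   supp_quo A p * supp_quo B q.  Expanding l^t by the binomial theorem then
   writes M_{l^t} as a sum of t+1 rank-one matrices
   (C(t,k) supp_quo A (l_Y^(t-k)))_A (supp_quo B (l_Z^k))_B, i.e. as a product
   of a (2^|Y| x (t+1)) and a ((t+1) x 2^|Z|) matrix; evaluation at S
   preserves this factorization. *)

From HB Require Import structures.
From mathcomp Require Import all_boot all_order all_algebra.
From mathcomp Require Import mpoly.
Set Implicit Arguments. Unset Strict Implicit. Unset Printing Implicit Defensive.
Import GRing.Theory.
Local Open Scope ring_scope.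

Section LinearExtension.
Variables (R : comNzRingType) (n : nat) (V : lmodType R).
Variable w : 'X_{1..n} -> V.

Definition mlinext (p : {mpoly R[n]}) : V := \sum_(m <- msupp p) p@_m *: w m.

Lemma mlinext_seq (s : seq 'X_{1..n}) p :
  uniq s -> {subset msupp p <= s} -> mlinext p = \sum_(m <- s) p@_m *: w m.
Proof.
move=> uniq_s supp_s; rewrite [RHS](bigID (mem (msupp p))) /=.
rewrite [X in _ + X]big1 ?addr0 => [|m /memN_msupp_eq0 ->]; last exact: scale0r.
rewrite -big_filter; apply/perm_big/uniq_perm; rewrite ?filter_uniq ?msupp_uniq //.
by move=> m; rewrite mem_filter; apply/esym/andb_idr/supp_s.
Qed.

Lemma mlinext_is_linear : linear mlinext.
Proof.
move=> a p q; set s := undup (msupp p ++ msupp q ++ msupp (a *: p + q)).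
have sub_s r : r \in [:: p; q; a *: p + q] -> {subset msupp r <= s}.
  by rewrite !inE => /or3P[] /eqP-> m supp_m; rewrite mem_undup !mem_cat supp_m ?orbT.
rewrite !(@mlinext_seq s) ?undup_uniq //; try by apply: sub_s; rewrite !inE eqxx ?orbT.
rewrite scaler_sumr -big_split; apply: eq_bigr => m _.
by rewrite mcoeffD mcoeffZ scalerDl scalerA.
Qed.

HB.instance Definition _ :=
  GRing.isLinear.Build R {mpoly R[n]} V _ mlinext mlinext_is_linear.

Lemma mlinextX m : mlinext 'X_[m] = w m.
Proof. by rewrite /mlinext msuppX big_seq1 mcoeffX eqxx scale1r. Qed.

End LinearExtension.

Lemma mlinextM (R : comNzRingType) (n : nat) (A : algType R)
    (w w1 w2 : 'X_{1..n} -> A) (p q : {mpoly R[n]}) :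
  {in msupp p & msupp q, forall m1 m2, w (m1 + m2)%MM = w1 m1 * w2 m2} ->
  mlinext w (p * q) = mlinext w1 p * mlinext w2 q.
Proof.
move=> wM; rewrite mpolyME linear_sum big_allpairs /= mulr_suml.
apply: eq_big_seq => m1 supp_m1; rewrite mulr_sumr; apply: eq_big_seq => m2 supp_m2.
by rewrite linearZ /= mlinextX wM // -scalerAl -scalerAr scalerA.
Qed.

Lemma setUI_split (T : finType) (Y X1 X2 : {set T}) :
  X1 \subset Y -> X2 \subset ~: Y ->
  (X1 :|: X2) :&: Y = X1 /\ (X1 :|: X2) :&: ~: Y = X2.
Proof.
move=> X1Y X2Y; rewrite !setIUl (setIidPl X1Y) (setIidPl X2Y).
have /eqP-> : X2 :&: Y == set0 by rewrite setI_eq0 disjoints_subset.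
have /eqP-> : X1 :&: ~: Y == set0 by rewrite setI_eq0 disjoints_subset setCK.
by rewrite setU0 set0U.
Qed.

Lemma eq_setU_split (T : finType) (Y X1 X2 A1 A2 : {set T}) :
  X1 \subset Y -> X2 \subset ~: Y -> A1 \subset Y -> A2 \subset ~: Y ->
  (X1 :|: X2 == A1 :|: A2) = (X1 == A1) && (X2 == A2).
Proof.
move=> X1Y X2Y A1Y A2Y; apply/eqP/andP => [eqX|[/eqP-> /eqP->] //].
have [XY XY'] := setUI_split X1Y X2Y; have [AY AY'] := setUI_split A1Y A2Y.
by split; apply/eqP; [rewrite -XY eqX AY | rewrite -XY' eqX AY'].
Qed.

Section Support.
Variables (R : comNzRingType) (n : nat).
Implicit Types (P U : {set 'I_n}) (m : 'X_{1..n}) (p q : {mpoly R[n]}).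

Definition mnm_supp m : {set 'I_n} := [set i | m i != 0%N].

Lemma mnm_suppD m1 m2 : mnm_supp (m1 + m2) = mnm_supp m1 :|: mnm_supp m2.
Proof. by apply/setP => i; rewrite !inE mnmDE addn_eq0 negb_and. Qed.

Definition vars_in P p := {in msupp p, forall m, mnm_supp m \subset P}.

Lemma vars_in1 P : vars_in P 1.
Proof.
by move=> m; rewrite -mpolyC1 msupp1 inE => /eqP->; apply/subsetP => i; rewrite inE mnm0E.
Qed.

Lemma vars_inM P p q : vars_in P p -> vars_in P q -> vars_in P (p * q).
Proof.
move=> Pp Pq m /msuppM_le/allpairsP[[m1 m2] /= [/Pp P1 /Pq P2 ->]].
by rewrite mnm_suppD subUset P1 P2.
Qed.

Lemma vars_inX P p k : vars_in P p -> vars_in P (p ^+ k).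
Proof.
move=> Pp; elim: k => [|k IHk]; first exact: vars_in1.
by rewrite exprS; apply: vars_inM.
Qed.

Definition linear_form_on P (c : 'I_n -> R) : {mpoly R[n]} :=
  \sum_(i in P) c i *: 'X_i.

Lemma vars_in_linear_form_on P (c : 'I_n -> R) :
  vars_in P (linear_form_on P c).
Proof.
move=> m /msupp_sum_le/flattenP[s /mapP[i]]; rewrite mem_filter => /andP[iP _] -> /=.
move=> /msuppZ_le; rewrite msuppX inE => /eqP->.
by apply/subsetP => j; rewrite inE mnm1E; have [<-|] := eqVneq i j.
Qed.

Definition mnm_quo U m : {mpoly R[n]} :=
  if mnm_supp m == U then \prod_(i < n) 'X_i ^+ (m i).-1 else 0.

Definition supp_quo U : {mpoly R[n]} -> {mpoly R[n]} := mlinext (mnm_quo U).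

Lemma mnm_quoD (Y A1 A2 : {set 'I_n}) m1 m2 :
  mnm_supp m1 \subset Y -> mnm_supp m2 \subset ~: Y ->
  A1 \subset Y -> A2 \subset ~: Y ->
  mnm_quo (A1 :|: A2) (m1 + m2) = mnm_quo A1 m1 * mnm_quo A2 m2.
Proof.
move=> m1Y m2Y A1Y A2Y; rewrite /mnm_quo mnm_suppD (eq_setU_split m1Y m2Y A1Y A2Y).
case: (_ == A1); last by rewrite mul0r.
case: (_ == A2); last by rewrite mulr0.
have m12 : [disjoint mnm_supp m1 & mnm_supp m2].
  by rewrite disjoints_subset (subset_trans m1Y) // -setCS setCK.
rewrite -big_split; apply: eq_bigr => i _ /=; rewrite mnmDE.
have [m1i0|m1i] := eqVneq (m1 i) 0%N; first by rewrite m1i0 expr0 mul1r.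
have : i \notin mnm_supp m2 by rewrite (disjointFr m12) // inE.
rewrite inE negbK => /eqP->.
by rewrite expr0 mulr1 addn0.
Qed.

Lemma supp_quoM (Y A1 A2 : {set 'I_n}) p q :
  vars_in Y p -> vars_in (~: Y) q -> A1 \subset Y -> A2 \subset ~: Y ->
  supp_quo (A1 :|: A2) (p * q) = supp_quo A1 p * supp_quo A2 q.
Proof.
move=> Yp Yq A1Y A2Y; apply: mlinextM => m1 m2 /Yp m1Y /Yq m2Y.
exact: (mnm_quoD m1Y m2Y A1Y A2Y).
Qed.

End Support.

Lemma coef_entryE (F : fieldType) (n : nat) (g : {mpoly F[n]}) (A B : {set 'I_n}) :
  coef_entry g A B = supp_quo (A :|: B) g.
Proof.
rewrite /coef_entry /supp_quo /mlinext big_mkcond; apply: eq_bigr => m _.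
by rewrite /mnm_quo; case: ifP; rewrite ?scaler0.
Qed.

Lemma linear_form_split (F : fieldType) (n : nat) (Y : {set 'I_n}) (c : 'I_n -> F) :
  linear_form c = linear_form_on Y c + linear_form_on (~: Y) c.
Proof.
rewrite /linear_form (bigID (mem Y)) /=; congr (_ + _).
by apply: eq_bigl => i; rewrite inE.
Qed.

Lemma coef_entry_linear_formX (F : fieldType) (n : nat) (Y A B : {set 'I_n})
    (c : 'I_n -> F) (t : nat) :
  A \subset Y -> B \subset ~: Y ->
  coef_entry (linear_form c ^+ t) A B =
    \sum_(k < t.+1) supp_quo A (linear_form_on Y c ^+ (t - k)) *+ 'C(t, k)
                    * supp_quo B (linear_form_on (~: Y) c ^+ k).
Proof.
move=> AY BY; rewrite coef_entryE (linear_form_split Y) exprDn /supp_quo linear_sum.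
apply: eq_bigr => k _; rewrite linearMn /= mulrnAl; congr (_ *+ _).
by apply: (supp_quoM (Y := Y)) => //; apply/vars_inX/vars_in_linear_form_on.
Qed.

Theorem lemma5 (F : fieldType) (n : nat) (Y : {set 'I_n}) (c : 'I_n -> F)
    (t : nat) (ht : (0 < t)%N) :
  forall S : 'I_n -> F,
    (\rank (coef_matrix_eval Y ((linear_form c) ^+ t) S) <= t.+1)%N.
Proof.
(* The bound holds for t = 0 as well. *)
move=> S.
pose G := \matrix_(i < #|powerset Y|, k < t.+1)
  (supp_quo (enum_val i) (linear_form_on Y c ^+ (t - k)) *+ 'C(t, k)).@[S].
pose H := \matrix_(k < t.+1, j < #|powerset (~: Y)|)
  (supp_quo (enum_val j) (linear_form_on (~: Y) c ^+ k)).@[S].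
have -> : coef_matrix_eval Y (linear_form c ^+ t) S = G *m H.
  apply/matrixP => i j; rewrite !mxE (coef_entry_linear_formX (Y := Y));
    try by rewrite -powersetE enum_valP.
  by rewrite rmorph_sum; apply: eq_bigr => k _; rewrite !mxE rmorphM.
exact: leq_trans (mxrankM_maxl _ _) (rank_leq_col _).
Qed.
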